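(* Let $K,L\in\mathcal{K}_+^2$ be convex bodies in $\mathbb{R}^2$. Then $$\frac12\int_{\partial L}\frac{1}{\kappa_{L,K}}\,d\mu_{\partial L;K}-V(L)\geq\lambda_2(-L_K)\Big(\frac{V(K,L)^2}{V(K)}-V(L)\Big).$$ When $K=B$ is the unit disc, this reduces to $$\frac12\int_{\partial L}\frac1{\kappa_L}\,d\mu_{\partial L}-V(L)\geq4\Big(\frac{|\partial L|^2}{4\pi}-V(L)\Big).$$
   Context: Here $n=2$. $\mathcal{K}_+^2$ is the class of convex bodies in $\mathbb{R}^2$ containing the origin in their interior with $C^2$ boundary and positive curvature, and $h_K$ is the support function on $\mathbb{S}^1$. $V(L)$ is area, $V(K,L)$ is the mixed area, and $|\partial L|$ is the perimeter. Curvatures and measures on $\partial L$: - $\nu:\partial L\to\mathbb{S}^1$ is the Gauss map of $L$, $\kappa_L$ the curvature of $\partial L$, and $d\mu_{\partial L}$ the arc-length measure. - For $X\in\partial L$, $\kappa_{L,K}(X)=\kappa_L(X)/\kappa_K(Y)$, where $Y\in\partial K$ is the point of $\partial K$ with outer normal $\nu(X)$. Equivalently, $\kappa_{L,K}$ is the eigenvalue of the anisotropic Weingarten map $d\nu_\gamma$, with $\nu_\gamma=h_K(\nu)\nu+\nabla h_K(\nu)$. - $d\mu_{\partial L;K}=h_K(\nu)\,d\mu_{\partial L}$. Notation on $\mathbb{S}^1$: - $D^2h=h''+h$ and $dV_K=\frac12h_KD^2h_K\,d\mu$. - $L_Kz=(D^2h_K)^{-1}D^2(zh_K)-z$ and $\ell_v^K(x)=\langle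 x,v\rangle/h_K(x)$. - $\lambda_2(-L_K)$ is the infimum of $\int z(-L_Kz)dV_K/\int z^2dV_K$ over nonzero $z\in C^2(\mathbb{S}^1)$ with $\int z\,dV_K=0$ and $\int z\ell_v^KdV_K=0$ for all $v\in\mathbb{R}^2$. *)

From Stdlib Require Import Reals.
From Coquelicot Require Import Coquelicot.
Open Scope R_scope.

(* Points of S^1 are parametrized by the angle t : u(t) = (cos t, sin t).
   Functions on S^1 are 2*PI-periodic functions R -> R. *)

Definition C2_S1 (z : R -> R) : Prop :=
  (forall t, z (t + 2 * PI) = z t) /\
  (forall t, ex_derive z t) /\
  (forall t, ex_derive (Derive z) t) /\
  (forall t, continuous (Derive (Derive z)) t).

Definition D2 (h : R -> R) (t : R) : R := Derive (Derive h) t + h t.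

Definition int_S1 (f : R -> R) : R := RInt f 0 (2 * PI).

(* A convex body K in K_+^2, given by its support function h_K on S^1:
   K has C^2 boundary with positive curvature iff h_K is C^2 with
   D^2 h_K > 0; the origin is interior iff h_K > 0. *)
Definition body_Kplus2 (h : R -> R) : Prop :=
  C2_S1 h /\ (forall t, 0 < h t) /\ (forall t, 0 < D2 h t).

(* Boundary point of the body with support function h whose outer unit
   normal is u(t):  X(t) = h(t) u(t) + h'(t) u'(t)  (inverse Gauss map). *)
Definition bdX1 (h : R -> R) (t : R) : R := h t * cos t - Derive h t * sin t.
Definition bdX2 (h : R -> R) (t : R) : R := h t * sin t + Derive h t * cos t.

Definition bd_speed (h : R -> R) (t : R) : R :=
  sqrt (Derive (bdX1 h) t ^ 2 + Derive (bdX2 h) t ^ 2).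

(* Integral over the boundary of the body with support function h, with
   respect to arc length d mu_{\partial L}, of a function given in terms of
   the normal parameter t (i.e. f t is the value at the point X(t), where
   nu(X(t)) = u(t)). *)
Definition bd_integral (h : R -> R) (f : R -> R) : R :=
  RInt (fun t => f t * bd_speed h t) 0 (2 * PI).

(* Curvature of the boundary at X(t): rate of turning of the normal angle
   with respect to arc length, d t / d s. *)
Definition curv (h : R -> R) (t : R) : R := / bd_speed h t.

(* kappa_{L,K}(X(t)) = kappa_L(X(t)) / kappa_K(Y(t)), Y(t) = point of dK with
   outer normal u(t). *)
Definition curv_rel (hL hK : R -> R) (t : R) : R := curv hL t / curv hK t.

(* Area V(L) = 1/2 \int_{dL} <X, nu> d mu_{dL}   (<X(t),u(t)> = h(t)). *)
Definition area (hL : R -> R) : R := / 2 * bd_integral hL hL.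

(* Mixed area V(K,L) = 1/2 \int_{dL} h_K(nu) d mu_{dL}. *)
Definition mixed_area (hK hL : R -> R) : R := / 2 * bd_integral hL hK.

Definition perimeter (hL : R -> R) : R := bd_integral hL (fun _ => 1).

Definition int_dVK (hK : R -> R) (f : R -> R) : R :=
  int_S1 (fun t => f t * (/ 2 * hK t * D2 hK t)).

Definition L_op (hK z : R -> R) (t : R) : R :=
  D2 (fun s => z s * hK s) t / D2 hK t - z t.

Definition ell (hK : R -> R) (v1 v2 : R) (t : R) : R :=
  (v1 * cos t + v2 * sin t) / hK t.

Definition rayleigh_set (hK : R -> R) (q : R) : Prop :=
  exists z : R -> R,
    C2_S1 z /\ (exists t, z t <> 0) /\
    int_dVK hK z = 0 /\
    (forall v1 v2, int_dVK hK (fun t => z t * ell hK v1 v2 t) = 0) /\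
    q = int_dVK hK (fun t => z t * (- L_op hK z t))
        / int_dVK hK (fun t => z t ^ 2).

Definition lambda2 (hK : R -> R) : Rbar := Glb_Rbar (rayleigh_set hK).

From Stdlib Require Import Reals Lra Psatz FunctionalExtensionality Classical.
From Coquelicot Require Import Coquelicot.
Open Scope R_scope.

(* Write q = D^2 h_K and, for a C^2 function f on S^1, w = f / h_K. Since
   -L_K w = w - D^2 f / q, the quantities A = \int w^2 dV_K, B = \int w (-L_K w) dV_K
   and C = \int (L_K w)^2 dV_K satisfy
     B - A = -1/2 \int f D^2 f,    C - B = B - A + 1/2 \int (D^2 f)^2 h_K / q.
   For f = h_L - (V(K,L)/V(K)) h_K - <v, .>, with v chosen so that w is orthogonal to
   every ell_v^K (the coefficient of h_K makes \int w dV_K = 0), B - A is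
   V(K,L)^2/V(K) - V(L) and C - B is the left-hand side of the theorem.
   Now A <= B because \int f D^2 f <= 0 whenever \int f q = 0 (Minkowski's inequality
   in infinitesimal form, a consequence of Wirtinger's inequality), B^2 <= A C by
   Cauchy-Schwarz, and lambda_2 <= B / A by definition, so
   lambda_2 (B - A) <= B^2 / A - B <= C - B.
   For the unit disc, -L_B z = -z'', and Wirtinger's inequality for functions
   orthogonal to 1, cos and sin gives lambda_2 >= 4.
   Both Wirtinger inequalities reduce to the Dirichlet bound k^2 \int g^2 <= \int g'^2
   on an interval of length pi / k at whose ends g vanishes, applied between nodes
   of g obtained from the intermediate value theorem. *)

Definition continuous_R (f : R -> R) : Prop := forall t, continuous f t.
Definition periodic (f : R -> R) : Prop := forall t, f (t + 2 * PI) = f t.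

(* Coquelicot's [continuous_plus], [is_derive_plus], ... are stated with the
   [plus]/[mult] of a normed module and do not unify with [Rplus]/[Rmult] under
   [apply]; these restatements let [cont_rules] and [derive_rules] match syntactically. *)
Lemma continuous_Rplus_comp (f g : R -> R) t :
  continuous f t -> continuous g t -> continuous (fun x => f x + g x) t.
Proof. intros; apply (continuous_plus f g); auto. Qed.

Lemma continuous_Rmult_comp (f g : R -> R) t :
  continuous f t -> continuous g t -> continuous (fun x => f x * g x) t.
Proof. intros; apply (continuous_mult f g); auto. Qed.

Lemma continuous_Ropp_comp (f : R -> R) t :
  continuous f t -> continuous (fun x => - f x) t.
Proof. intros; apply (continuous_opp f); auto. Qed.

Lemma continuous_Rminus_comp (f g : R -> R) t :
  continuous f t -> continuous g t -> continuous (fun x => f x - g x) t.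
Proof. intros; apply (continuous_minus f g); auto. Qed.

Lemma continuous_Rdiv_comp (f g : R -> R) t :
  continuous f t -> continuous g t -> g t <> 0 -> continuous (fun x => f x / g x) t.
Proof. intros. apply continuous_Rmult_comp; auto. apply continuous_Rinv_comp; auto. Qed.

Lemma continuous_pow_comp (f : R -> R) n t :
  continuous f t -> continuous (fun x => f x ^ n) t.
Proof.
  intros. induction n; simpl.
  - apply continuous_const.
  - apply continuous_Rmult_comp; auto.
Qed.

Lemma continuous_R_comp (f g : R -> R) t :
  continuous_R f -> continuous g t -> continuous (fun x => f (g x)) t.
Proof. intros Hf Hg. apply (continuous_comp g f); auto. Qed.

Ltac cont_rules := repeat (match goal with
  | H : continuous_R ?f |- continuous ?f _ => apply H
  | H : continuous_R ?f |- continuous (fun x => ?f x) _ => apply H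
  | H : continuous_R ?f |- continuous (fun x => ?f _) _ =>
      apply (continuous_R_comp f); [exact H|]
  | |- continuous (fun _ => ?c) _ => apply continuous_const
  | |- continuous (fun x => x) _ => apply continuous_id
  | |- continuous (fun x => _ + _) _ => apply continuous_Rplus_comp
  | |- continuous (fun x => _ - _) _ => apply continuous_Rminus_comp
  | |- continuous (fun x => _ * _) _ => apply continuous_Rmult_comp
  | |- continuous (fun x => _ / _) _ => apply continuous_Rdiv_comp
  | |- continuous (fun x => - _) _ => apply continuous_Ropp_comp
  | |- continuous (fun x => / _) _ => apply continuous_Rinv_comp
  | |- continuous (fun x => _ ^ _) _ => apply continuous_pow_comp
  | |- continuous (fun x => cos _) _ => apply continuous_cos_comp
  | |- continuous (fun x => sin _) _ => apply continuous_sin_comp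
  | |- continuous cos _ => apply continuous_cos
  | |- continuous sin _ => apply continuous_sin
  end).

Lemma is_derive_val (f : R -> R) (t l l' : R) : is_derive f t l -> l = l' -> is_derive f t l'.
Proof. intros H ->; auto. Qed.

Lemma is_derive_Rplus (f g : R -> R) t a b :
  is_derive f t a -> is_derive g t b -> is_derive (fun x => f x + g x) t (a + b).
Proof. intros; apply (is_derive_plus f g); auto. Qed.

Lemma is_derive_Rminus (f g : R -> R) t a b :
  is_derive f t a -> is_derive g t b -> is_derive (fun x => f x - g x) t (a - b).
Proof. intros; apply (is_derive_minus f g); auto. Qed.

Lemma is_derive_Ropp (f : R -> R) t a : is_derive f t a -> is_derive (fun x => - f x) t (- a).
Proof. intros; apply (is_derive_opp f); auto. Qed.

Lemma is_derive_Rmult (f g : R -> R) t a b :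
  is_derive f t a -> is_derive g t b -> is_derive (fun x => f x * g x) t (a * g t + f t * b).
Proof. intros; apply (is_derive_mult f g); auto. intros; apply Rmult_comm. Qed.

Lemma is_derive_Rconst (c t : R) : is_derive (fun _ => c) t 0.
Proof. apply (is_derive_const (K := R_AbsRing) (V := R_NormedModule)). Qed.

Lemma is_derive_Rid (t : R) : is_derive (fun x => x) t 1.
Proof. apply (is_derive_id (K := R_AbsRing)). Qed.

Lemma is_derive_Rdiv (f g : R -> R) t a b :
  is_derive f t a -> is_derive g t b -> g t <> 0 ->
  is_derive (fun x => f x / g x) t ((a * g t - f t * b) / g t ^ 2).
Proof. intros; apply is_derive_div; auto. Qed.

Lemma is_derive_cos_comp (f : R -> R) t a :
  is_derive f t a -> is_derive (fun x => cos (f x)) t (a * - sin (f t)).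
Proof. intros. apply (is_derive_comp cos f); auto. apply is_derive_cos. Qed.

Lemma is_derive_sin_comp (f : R -> R) t a :
  is_derive f t a -> is_derive (fun x => sin (f x)) t (a * cos (f t)).
Proof. intros. apply (is_derive_comp sin f); auto. apply is_derive_sin. Qed.

Lemma is_derive_pow2 (f : R -> R) t a :
  is_derive f t a -> is_derive (fun x => f x ^ 2) t (2 * a * f t).
Proof.
  intros H. change (is_derive (fun x => f x * (f x * 1)) t (2 * a * f t)).
  eapply is_derive_val.
  - apply is_derive_Rmult; [exact H|]. apply (is_derive_Rmult f (fun _ => 1)); [exact H|].
    apply is_derive_Rconst.
  - simpl; ring.
Qed.

Ltac derive_rules := repeat (match goal with
  | |- is_derive (fun _ => ?c) _ _ => apply is_derive_Rconst
  | |- is_derive (fun x => x) _ _ => apply is_derive_Rid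
  | |- is_derive (fun x => _ + _) _ _ => apply is_derive_Rplus
  | |- is_derive (fun x => _ - _) _ _ => apply is_derive_Rminus
  | |- is_derive (fun x => _ ^ 2) _ _ => apply is_derive_pow2
  | |- is_derive (fun x => _ * _) _ _ => apply is_derive_Rmult
  | |- is_derive (fun x => _ / _) _ _ => apply is_derive_Rdiv
  | |- is_derive (fun x => - _) _ _ => apply is_derive_Ropp
  | |- is_derive (fun x => cos _) _ _ => apply is_derive_cos_comp
  | |- is_derive (fun x => sin _) _ _ => apply is_derive_sin_comp
  | |- is_derive cos _ _ => apply is_derive_cos
  | |- is_derive sin _ _ => apply is_derive_sin
  | H : forall t, is_derive ?f t _ |- is_derive ?f _ _ => apply H
  | H : forall t, is_derive ?f t _ |- is_derive (fun x => ?f x) _ _ => apply H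
  end).

Lemma continuous_of_is_derive (g g1 : R -> R) :
  (forall t, is_derive g t (g1 t)) -> continuous_R g.
Proof.
  intros Hd t. apply (ex_derive_continuous (K := R_AbsRing) (V := R_NormedModule) g t).
  exists (g1 t). apply Hd.
Qed.

Lemma periodic_of_is_derive (F f : R -> R) :
  periodic F -> (forall t, is_derive F t (f t)) -> periodic f.
Proof.
  intros Hp Hd t.
  assert (H : is_derive (fun x => F (x + 2 * PI)) t (f (t + 2 * PI))).
  { eapply is_derive_val.
    - apply (is_derive_comp F (fun x => x + 2 * PI)); [apply Hd|].
      apply is_derive_Rplus; [apply is_derive_Rid | apply is_derive_Rconst].
    - simpl. unfold scal; simpl; unfold mult; simpl. ring. }
  apply is_derive_ext with (g := F) in H; [|intros; apply Hp].
  apply is_derive_unique in H. rewrite <- H. apply is_derive_unique, Hd.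
Qed.

Lemma periodic_sin : periodic sin.
Proof. intros t. rewrite sin_plus, sin_2PI, cos_2PI. ring. Qed.

Lemma periodic_cos : periodic cos.
Proof. intros t. rewrite cos_plus, sin_2PI, cos_2PI. ring. Qed.

(** * Integrals over a period *)

Lemma ex_RInt_continuous_R (f : R -> R) a b : continuous_R f -> ex_RInt f a b.
Proof. intros H. apply (ex_RInt_continuous (V := R_CompleteNormedModule)). intros; apply H. Qed.

Lemma RInt_Rplus (f g : R -> R) a b : continuous_R f -> continuous_R g ->
  RInt (fun x => f x + g x) a b = RInt f a b + RInt g a b.
Proof. intros. apply (RInt_plus f g); apply ex_RInt_continuous_R; auto. Qed.

Lemma RInt_Rminus (f g : R -> R) a b : continuous_R f -> continuous_R g ->
  RInt (fun x => f x - g x) a b = RInt f a b - RInt g a b.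
Proof. intros. apply (RInt_minus f g); apply ex_RInt_continuous_R; auto. Qed.

Lemma RInt_Rmult_l (f : R -> R) a b c : continuous_R f ->
  RInt (fun x => c * f x) a b = c * RInt f a b.
Proof. intros. apply (RInt_scal f a b c). apply ex_RInt_continuous_R; auto. Qed.

Lemma RInt_Chasles_R (f : R -> R) a b c : continuous_R f ->
  RInt f a b + RInt f b c = RInt f a c.
Proof. intros. apply (RInt_Chasles f); apply ex_RInt_continuous_R; auto. Qed.

Lemma int_S1_plus f g : continuous_R f -> continuous_R g ->
  int_S1 (fun x => f x + g x) = int_S1 f + int_S1 g.
Proof. apply RInt_Rplus. Qed.

Lemma int_S1_minus f g : continuous_R f -> continuous_R g ->
  int_S1 (fun x => f x - g x) = int_S1 f - int_S1 g.
Proof. apply RInt_Rminus. Qed.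

Lemma int_S1_scal f c : continuous_R f -> int_S1 (fun x => c * f x) = c * int_S1 f.
Proof. apply RInt_Rmult_l. Qed.

Lemma int_S1_ext f g : (forall x, f x = g x) -> int_S1 f = int_S1 g.
Proof. intros H. apply RInt_ext. intros; auto. Qed.

Lemma int_S1_const c : int_S1 (fun _ => c) = 2 * PI * c.
Proof. unfold int_S1. rewrite RInt_const. simpl. unfold scal; simpl; unfold mult; simpl. ring. Qed.

Lemma int_S1_ge0 f : continuous_R f -> (forall t, 0 <= f t) -> 0 <= int_S1 f.
Proof.
  intros. apply RInt_ge_0; auto; [pose proof PI_RGT_0; lra | apply ex_RInt_continuous_R; auto].
Qed.

Lemma int_S1_gt0 f : continuous_R f -> (forall t, 0 < f t) -> 0 < int_S1 f.
Proof. intros. apply RInt_gt_0; auto. pose proof PI_RGT_0; lra. Qed.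

Ltac int_S1_linear := repeat first
  [ rewrite int_S1_plus by (intros ?t; cont_rules; auto)
  | rewrite int_S1_minus by (intros ?t; cont_rules; auto)
  | rewrite int_S1_scal by (intros ?t; cont_rules; auto) ].
Ltac int_S1_linear_in H := repeat first
  [ rewrite int_S1_plus in H by (intros ?t; cont_rules; auto)
  | rewrite int_S1_minus in H by (intros ?t; cont_rules; auto)
  | rewrite int_S1_scal in H by (intros ?t; cont_rules; auto) ].

Lemma int_S1_derive_periodic (F f : R -> R) :
  periodic F -> (forall t, is_derive F t (f t)) -> continuous_R f -> int_S1 f = 0.
Proof.
  intros Hp Hd Hc. unfold int_S1.
  rewrite (is_RInt_unique f 0 (2 * PI) (minus (F (2 * PI)) (F 0))).
  - unfold minus, plus, opp; simpl. rewrite <- (Rplus_0_l (2 * PI)), Hp. ring.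
  - apply (is_RInt_derive F f); intros; auto.
Qed.

Lemma int_S1_by_parts (f f1 g g1 : R -> R) :
  periodic f -> periodic g ->
  (forall t, is_derive f t (f1 t)) -> (forall t, is_derive g t (g1 t)) ->
  continuous_R f1 -> continuous_R g1 ->
  int_S1 (fun t => f1 t * g t) = - int_S1 (fun t => f t * g1 t).
Proof.
  intros Pf Pg Df Dg Cf1 Cg1.
  pose proof (continuous_of_is_derive f f1 Df) as Cf.
  pose proof (continuous_of_is_derive g g1 Dg) as Cg.
  assert (H : int_S1 (fun t => f1 t * g t + f t * g1 t) = 0).
  { apply (int_S1_derive_periodic (fun t => f t * g t)).
    - intros t; rewrite Pf, Pg; auto.
    - intros t; derive_rules.
    - intros t; cont_rules. }
  int_S1_linear_in H. lra.
Qed.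

Lemma RInt_period_shift (F : R -> R) a :
  periodic F -> continuous_R F -> RInt F a (a + 2 * PI) = int_S1 F.
Proof.
  intros Hp Hc. unfold int_S1.
  rewrite <- (RInt_Chasles_R F a 0 (a + 2 * PI)), <- (RInt_Chasles_R F 0 (2 * PI)) by auto.
  assert (E : RInt F (2 * PI) (a + 2 * PI) = RInt F 0 a).
  { pose proof (RInt_comp_lin F 1 (2 * PI) 0 a) as H.
    replace (1 * 0 + 2 * PI) with (2 * PI) in H by ring.
    replace (1 * a + 2 * PI) with (a + 2 * PI) in H by ring.
    rewrite <- H by (apply ex_RInt_continuous_R; auto).
    apply RInt_ext. intros x _. unfold scal; simpl; unfold mult; simpl.
    rewrite !Rmult_1_l. apply Hp. }
  assert (Hloop : RInt F a 0 + RInt F 0 a = 0)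
    by (rewrite RInt_Chasles_R, RInt_point by auto; reflexivity).
  rewrite E. lra.
Qed.

Lemma int_S1_pos_of_pos_at (g : R -> R) t0 :
  continuous_R g -> periodic g -> (forall t, 0 <= g t) -> 0 < g t0 -> 0 < int_S1 g.
Proof.
  intros Hc Hp Hn H0. pose proof PI_RGT_0 as Hpi.
  rewrite <- (RInt_period_shift g (t0 - PI)) by auto.
  destruct (proj2 (continuity_pt_filterlim g t0) (Hc t0) (g t0 / 2) ltac:(lra))
    as [alp [Halp Hx]].
  set (d := Rmin (alp / 2) (PI / 2)).
  assert (Hd : 0 < d <= alp / 2 /\ d <= PI / 2).
  { unfold d; repeat split; [apply Rmin_glb_lt; lra | apply Rmin_l | apply Rmin_r]. }
  assert (Hnear : forall x, t0 - d < x < t0 + d -> g t0 / 2 <= g x).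
  { intros x Hxr. destruct (Req_dec x t0) as [->|Hne]; [lra|].
    assert (Hdist : Rdist (g x) (g t0) < g t0 / 2).
    { apply Hx. split; [split; [exact Logic.I | auto] |].
      simpl. unfold Rdist. apply Rabs_def1; lra. }
    unfold Rdist in Hdist. apply Rabs_def2 in Hdist. lra. }
  rewrite <- (RInt_Chasles_R g (t0 - PI) (t0 - d)), <- (RInt_Chasles_R g (t0 - d) (t0 + d))
    by auto.
  assert (0 <= RInt g (t0 - PI) (t0 - d))
    by (apply RInt_ge_0; auto; [lra | apply ex_RInt_continuous_R; auto]).
  assert (0 <= RInt g (t0 + d) (t0 - PI + 2 * PI))
    by (apply RInt_ge_0; auto; [lra | apply ex_RInt_continuous_R; auto]).
  assert (Hmid : RInt (fun _ => g t0 / 2) (t0 - d) (t0 + d) <= RInt g (t0 - d) (t0 + d)).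
  { apply RInt_le; [lra | apply ex_RInt_continuous_R; intros t; cont_rules
                    | apply ex_RInt_continuous_R; auto |].
    intros x Hxr. apply Hnear. lra. }
  rewrite RInt_const in Hmid. unfold scal in Hmid; simpl in Hmid; unfold mult in Hmid; simpl in Hmid.
  nra.
Qed.

Lemma int_S1_cos : int_S1 cos = 0.
Proof.
  apply (int_S1_derive_periodic sin); [apply periodic_sin | intros t; apply is_derive_sin |].
  intros t; cont_rules.
Qed.

Lemma int_S1_sin : int_S1 sin = 0.
Proof.
  apply (int_S1_derive_periodic (fun x => - cos x)).
  - intros t; rewrite periodic_cos; auto.
  - intros t; eapply is_derive_val; [derive_rules | ring].
  - intros t; cont_rules.
Qed.

Lemma int_S1_sin_cos : int_S1 (fun x => sin x * cos x) = 0.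
Proof.
  apply (int_S1_derive_periodic (fun x => sin x ^ 2 / 2)).
  - intros t; rewrite periodic_sin; auto.
  - intros t; eapply is_derive_val; [derive_rules; lra | simpl; field].
  - intros t; cont_rules.
Qed.

Lemma int_S1_cos2_sin2 : int_S1 (fun x => cos x ^ 2) = PI /\ int_S1 (fun x => sin x ^ 2) = PI.
Proof.
  assert (Hdiff : int_S1 (fun x => cos x ^ 2 - sin x ^ 2) = 0).
  { apply (int_S1_derive_periodic (fun x => sin x * cos x)).
    - intros t; rewrite periodic_sin, periodic_cos; auto.
    - intros t; eapply is_derive_val; [derive_rules | simpl; ring].
    - intros t; cont_rules. }
  assert (Hsum : int_S1 (fun x => cos x ^ 2 + sin x ^ 2) = 2 * PI).
  { rewrite (int_S1_ext _ (fun _ => 1)), int_S1_const; [ring|].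
    intros x. rewrite <- (sin2_cos2 x). unfold Rsqr. ring. }
  int_S1_linear_in Hdiff; int_S1_linear_in Hsum. split; lra.
Qed.

(** * Wirtinger inequalities *)

Lemma le_of_forall_scaled_le (X Y : R) : (forall r, 0 < r < 1 -> r * X <= Y) -> X <= Y.
Proof.
  intros H. destruct (Rle_lt_dec X Y) as [|Hlt]; auto. exfalso.
  destruct (Rle_lt_dec X 0); [specialize (H (1/2) ltac:(lra)); lra|].
  destruct (Rle_lt_dec Y 0); [specialize (H (1/2) ltac:(lra)); lra|].
  assert (Hq : 0 < Y / X < 1).
  { split; [apply Rdiv_lt_0_compat; lra|]. apply Rmult_lt_reg_r with X; [lra|].
    unfold Rdiv. rewrite Rmult_assoc, Rinv_l; lra. }
  specialize (H ((1 + Y / X) / 2) ltac:(lra)).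
  assert (E : (1 + Y / X) / 2 * X = (X + Y) / 2) by (field; lra). lra.
Qed.

(* Riccati substitution: with tn = tan (m (x - c)) and H = - m g^2 tn, one has
   g1^2 - m^2 g^2 - H' = (g1 + m g tn)^2, and H vanishes at both ends. *)
Lemma wirtinger_interval_strict (g g1 : R -> R) s T m :
  0 < T -> 0 < m -> m * T < PI ->
  (forall t, is_derive g t (g1 t)) -> continuous_R g1 -> g s = 0 -> g (s + T) = 0 ->
  m ^ 2 * RInt (fun x => g x ^ 2) s (s + T) <= RInt (fun x => g1 x ^ 2) s (s + T).
Proof.
  intros HT Hm HmT Hd Hc Hs HsT.
  pose proof (continuous_of_is_derive g g1 Hd) as Hgc.
  set (c := s + T / 2).
  assert (Hcos : forall x, s <= x <= s + T -> 0 < cos (m * (x - c))).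
  { intros x Hx. apply cos_gt_0; unfold c; nra. }
  set (tn := fun x => sin (m * (x - c)) / cos (m * (x - c))).
  set (H := fun x => - m * (g x ^ 2 * tn x)).
  set (dH := fun x => g1 x ^ 2 - m ^ 2 * g x ^ 2 - (g1 x + m * g x * tn x) ^ 2).
  assert (HI : is_RInt dH s (s + T) 0).
  { replace 0 with (minus (H (s + T)) (H s)).
    - apply (is_RInt_derive (V := R_CompleteNormedModule) H dH); intros x Hx;
        rewrite Rmin_left, Rmax_right in Hx by lra; specialize (Hcos x Hx).
      + unfold H, dH, tn. eapply is_derive_val; [derive_rules; lra | simpl; field; lra].
      + unfold dH, tn. cont_rules; lra.
    - unfold H, minus, plus, opp; simpl. rewrite Hs, HsT. ring. }
  assert (Hle : RInt dH s (s + T) <= RInt (fun x => g1 x ^ 2 - m ^ 2 * g x ^ 2) s (s + T)).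
  { apply RInt_le; [lra | exists 0; exact HI | apply ex_RInt_continuous_R; intros t; cont_rules |].
    intros x _. unfold dH. pose proof (pow2_ge_0 (g1 x + m * g x * tn x)). lra. }
  rewrite (is_RInt_unique _ _ _ _ HI), RInt_Rminus, RInt_Rmult_l in Hle by (intros t; cont_rules).
  lra.
Qed.

Lemma wirtinger_interval (g g1 : R -> R) s T k :
  0 < T -> 0 < k -> k * T <= PI ->
  (forall t, is_derive g t (g1 t)) -> continuous_R g1 -> g s = 0 -> g (s + T) = 0 ->
  k ^ 2 * RInt (fun x => g x ^ 2) s (s + T) <= RInt (fun x => g1 x ^ 2) s (s + T).
Proof.
  intros HT Hk HkT Hd Hc Hs HsT. apply le_of_forall_scaled_le. intros r Hr.
  assert (Hsr : 0 < sqrt r < 1).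
  { split; [apply sqrt_lt_R0; lra|]. rewrite <- sqrt_1. apply sqrt_lt_1; lra. }
  replace (r * (k ^ 2 * RInt (fun x => g x ^ 2) s (s + T)))
    with ((k * sqrt r) ^ 2 * RInt (fun x => g x ^ 2) s (s + T))
    by (rewrite Rpow_mult_distr, pow2_sqrt by lra; ring).
  apply wirtinger_interval_strict; auto; [nra|].
  assert (k * T * sqrt r < k * T * 1) by (apply Rmult_lt_compat_l; nra). nra.
Qed.

Lemma wirtinger_nodes (g g1 : R -> R) a T k (n : nat) :
  0 < T -> 0 < k -> k * T <= PI ->
  (forall t, is_derive g t (g1 t)) -> continuous_R g1 ->
  (forall j, (j <= n)%nat -> g (a + INR j * T) = 0) ->
  k ^ 2 * RInt (fun x => g x ^ 2) a (a + INR n * T)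
    <= RInt (fun x => g1 x ^ 2) a (a + INR n * T).
Proof.
  intros HT Hk HkT Hd Hc. pose proof (continuous_of_is_derive g g1 Hd) as Hgc.
  induction n as [|n IH]; intros Hz.
  - simpl. rewrite Rmult_0_l, Rplus_0_r, !RInt_point. simpl. unfold zero; simpl. lra.
  - rewrite S_INR, Rmult_plus_distr_r, Rmult_1_l, <- Rplus_assoc.
    rewrite <- (RInt_Chasles_R (fun x => g x ^ 2) a (a + INR n * T)),
      <- (RInt_Chasles_R (fun x => g1 x ^ 2) a (a + INR n * T)) by (intros t; cont_rules).
    assert (Hleft := IH (fun j Hj => Hz j ltac:(lia))).
    assert (Hend : g (a + INR n * T + T) = 0).
    { replace (a + INR n * T + T) with (a + INR (S n) * T) by (rewrite S_INR; ring).
      apply Hz; lia. }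
    pose proof (wirtinger_interval g g1 (a + INR n * T) T k HT Hk HkT Hd Hc
      (Hz n ltac:(lia)) Hend).
    lra.
Qed.

Lemma wirtinger_periodic_nodes (g g1 : R -> R) a (n : nat) :
  (0 < n)%nat -> periodic g -> (forall t, is_derive g t (g1 t)) -> continuous_R g1 ->
  (forall j, (j < n)%nat -> g (a + INR j * (2 * PI / INR n)) = 0) ->
  (INR n / 2) ^ 2 * int_S1 (fun x => g x ^ 2) <= int_S1 (fun x => g1 x ^ 2).
Proof.
  intros Hn Hp Hd Hc Hz. pose proof PI_RGT_0.
  pose proof (continuous_of_is_derive g g1 Hd) as Hgc.
  pose proof (periodic_of_is_derive g g1 Hp Hd) as Hp1.
  assert (HnR : 0 < INR n) by (apply lt_0_INR; lia).
  set (T := 2 * PI / INR n).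
  assert (Hend : a + INR n * T = a + 2 * PI) by (unfold T; field; lra).
  assert (Hnodes : forall j, (j <= n)%nat -> g (a + INR j * T) = 0).
  { intros j Hj. destruct (Nat.eq_dec j n) as [->|Hne]; [|apply Hz; lia].
    rewrite Hend, Hp, <- (Hz 0%nat Hn). simpl. f_equal. ring. }
  pose proof (wirtinger_nodes g g1 a T (INR n / 2) n) as Hw.
  rewrite Hend, !RInt_period_shift in Hw by (auto; intros t; simpl; rewrite ?Hp, ?Hp1; auto;
    cont_rules).
  apply Hw; auto; unfold T; [apply Rdiv_lt_0_compat | | apply Req_le; field]; lra.
Qed.

Lemma IVT_opp_ends (psi : R -> R) a b :
  a < b -> continuous_R psi -> psi b = - psi a -> exists x, a <= x <= b /\ psi x = 0.
Proof.
  intros Hab Hc He.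
  assert (Hcp : continuity psi) by (intros x; apply continuity_pt_filterlim, Hc).
  destruct (Rtotal_order (psi a) 0) as [Hn|[Hz|Hpos]].
  - destruct (IVT psi a b Hcp Hab Hn) as [x Hx]; [lra|]. exists x; auto.
  - exists a; split; auto; lra.
  - destruct (IVT (fun x => - psi x) a b (continuity_opp _ Hcp) Hab) as [x [Hx1 Hx2]]; try lra.
    exists x; split; auto; lra.
Qed.

Lemma wirtinger_mean_zero (g g1 : R -> R) :
  periodic g -> (forall t, is_derive g t (g1 t)) -> continuous_R g1 -> int_S1 g = 0 ->
  int_S1 (fun x => g x ^ 2) <= int_S1 (fun x => g1 x ^ 2).
Proof.
  intros Hp Hd Hc1 H0. pose proof PI_RGT_0.
  pose proof (continuous_of_is_derive g g1 Hd) as Hgc.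
  destruct (IVT_opp_ends (fun t => g t - g (t + PI)) 0 PI) as [a [_ Ha]]; auto.
  { intros t; cont_rules. }
  { replace (PI + PI) with (0 + 2 * PI) by ring. rewrite Hp, Rplus_0_l. ring. }
  set (c := g a). set (h := fun x => g x - c).
  assert (Hdh : forall t, is_derive h t (g1 t))
    by (intros t; unfold h; eapply is_derive_val; [derive_rules | ring]).
  assert (Hnodes : forall j, (j < 2)%nat -> h (a + INR j * (2 * PI / INR 2)) = 0).
  { intros [|[|j]] Hj; simpl; unfold h, c.
    - rewrite Rmult_0_l, Rplus_0_r. ring.
    - replace (a + 1 * (2 * PI / (1 + 1))) with (a + PI) by field. lra.
    - lia. }
  pose proof (wirtinger_periodic_nodes h g1 a 2 ltac:(lia)) as Hw.
  replace ((INR 2 / 2) ^ 2) with 1 in Hw by (simpl; field).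
  assert (Eh : int_S1 (fun x => h x ^ 2) = int_S1 (fun x => g x ^ 2) + 2 * PI * c ^ 2).
  { rewrite (int_S1_ext _ (fun x => g x ^ 2 - (2 * c) * g x + c ^ 2)) by (intros; unfold h; ring).
    int_S1_linear. rewrite H0, int_S1_const. ring. }
  assert (0 <= 2 * PI * c ^ 2) by (pose proof (pow2_ge_0 c); nra).
  assert (Hw' : int_S1 (fun x => h x ^ 2) <= int_S1 (fun x => g1 x ^ 2)).
  { rewrite <- (Rmult_1_l (int_S1 (fun x => h x ^ 2))). apply Hw; auto.
    intros t; unfold h; rewrite Hp; auto. }
  lra.
Qed.

Lemma trig_fit_quarter_nodes (g : R -> R) a :
  g a - g (a + PI / 2) + g (a + PI) - g (a + 3 * PI / 2) = 0 ->
  exists c al be, forall j, (j < 4)%nat ->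
    g (a + INR j * (PI / 2)) = c + al * cos (a + INR j * (PI / 2)) + be * sin (a + INR j * (PI / 2)).
Proof.
  intros Hz. set (C := cos a). set (S := sin a).
  set (P := (g a - g (a + PI)) / 2). set (Q := (g (a + PI / 2) - g (a + 3 * PI / 2)) / 2).
  exists ((g a + g (a + PI)) / 2), (P * C - Q * S), (P * S + Q * C).
  assert (HCS : S ^ 2 + C ^ 2 = 1) by (unfold S, C; rewrite <- (sin2_cos2 a); unfold Rsqr; ring).
  assert (Ec1 : cos (a + PI / 2) = - S) by (rewrite cos_plus, cos_PI2, sin_PI2; unfold S; ring).
  assert (Es1 : sin (a + PI / 2) = C) by (rewrite sin_plus, cos_PI2, sin_PI2; unfold C; ring).
  assert (HP : (P * C - Q * S) * C + (P * S + Q * C) * S = P)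
    by (transitivity (P * (S ^ 2 + C ^ 2)); [ring | rewrite HCS; ring]).
  assert (HQ : (P * C - Q * S) * - S + (P * S + Q * C) * C = Q)
    by (transitivity (Q * (S ^ 2 + C ^ 2)); [ring | rewrite HCS; ring]).
  intros [|[|[|[|j]]]] Hj; [| | | | lia]; simpl.
  - rewrite Rmult_0_l, Rplus_0_r. fold C S. unfold P in *. lra.
  - rewrite Rmult_1_l, Ec1, Es1. unfold P, Q in *. lra.
  - replace (a + (1 + 1) * (PI / 2)) with (a + PI) by field.
    rewrite neg_cos, neg_sin. fold C S. unfold P in *. lra.
  - replace (a + (1 + 1 + 1) * (PI / 2)) with (a + PI / 2 + PI) by field.
    rewrite neg_cos, neg_sin, Ec1, Es1.
    replace (a + PI / 2 + PI) with (a + 3 * PI / 2) by field. unfold P, Q in *. lra.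
Qed.

Lemma int_S1_sq_sub_trig (g : R -> R) c al be :
  continuous_R g -> int_S1 (fun x => g x * cos x) = 0 -> int_S1 (fun x => g x * sin x) = 0 ->
  int_S1 (fun x => (g x - c - al * cos x - be * sin x) ^ 2)
  = int_S1 (fun x => g x ^ 2) - 2 * c * int_S1 g + 2 * PI * c ^ 2 + PI * (al ^ 2 + be ^ 2).
Proof.
  intros Hg Hcos Hsin. destruct int_S1_cos2_sin2 as [Hcos2 Hsin2].
  rewrite (int_S1_ext _ (fun x => g x ^ 2 + c ^ 2 + al ^ 2 * cos x ^ 2 + be ^ 2 * sin x ^ 2
     - (2 * c) * g x - (2 * al) * (g x * cos x) - (2 * be) * (g x * sin x)
     + (2 * c * al) * cos x + (2 * c * be) * sin x + (2 * al * be) * (sin x * cos x)))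
    by (intros; ring).
  int_S1_linear.
  rewrite Hcos, Hsin, Hsin2, Hcos2, int_S1_sin_cos, int_S1_cos, int_S1_sin, int_S1_const.
  ring.
Qed.

Lemma wirtinger_orth_trig (g g1 : R -> R) :
  periodic g -> (forall t, is_derive g t (g1 t)) -> continuous_R g1 ->
  int_S1 g = 0 -> int_S1 (fun x => g x * cos x) = 0 -> int_S1 (fun x => g x * sin x) = 0 ->
  4 * int_S1 (fun x => g x ^ 2) <= int_S1 (fun x => g1 x ^ 2).
Proof.
  intros Hp Hd Hc1 H0 Hcos Hsin. pose proof PI_RGT_0.
  pose proof (continuous_of_is_derive g g1 Hd) as Hgc.
  destruct (IVT_opp_ends
    (fun t => g t - g (t + PI / 2) + g (t + PI) - g (t + 3 * PI / 2)) 0 (PI / 2))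
    as [a [_ Ha]]; [lra | intros t; cont_rules | |].
  { replace (PI / 2 + PI / 2) with PI by field.
    replace (PI / 2 + PI) with (3 * PI / 2) by field.
    replace (PI / 2 + 3 * PI / 2) with (0 + 2 * PI) by field.
    rewrite Hp, !Rplus_0_l. ring. }
  destruct (trig_fit_quarter_nodes g a Ha) as [c [al [be Hfit]]].
  set (h := fun x => g x - c - al * cos x - be * sin x).
  set (h1 := fun x => g1 x - 0 - be * cos x - (- al) * sin x).
  assert (Hdh : forall t, is_derive h t (h1 t))
    by (intros t; unfold h, h1; eapply is_derive_val; [derive_rules | cbv beta; ring]).
  assert (Hw : 4 * int_S1 (fun x => h x ^ 2) <= int_S1 (fun x => h1 x ^ 2)).
  { replace 4 with ((INR 4 / 2) ^ 2) by (simpl; field).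
    apply (wirtinger_periodic_nodes h h1 a 4); [lia | | auto | intros t; unfold h1; cont_rules |].
    - intros t; unfold h; rewrite Hp, periodic_cos, periodic_sin; auto.
    - intros j Hj. replace (2 * PI / INR 4) with (PI / 2) by (simpl; field).
      unfold h. rewrite Hfit by auto. ring. }
  assert (Hg1sin : int_S1 (fun x => g1 x * sin x) = 0).
  { rewrite (int_S1_by_parts g g1 sin cos); auto using periodic_sin.
    - rewrite Hcos; ring.
    - intros t; apply is_derive_sin.
    - intros t; cont_rules. }
  assert (Hg1cos : int_S1 (fun x => g1 x * cos x) = 0).
  { rewrite (int_S1_by_parts g g1 cos (fun x => - sin x)); auto using periodic_cos.
    - rewrite (int_S1_ext _ (fun t => -1 * (g t * sin t))) by (intros; ring).
      int_S1_linear. rewrite Hsin; ring.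
    - intros t; apply is_derive_cos.
    - intros t; cont_rules. }
  unfold h, h1 in Hw. rewrite !int_S1_sq_sub_trig, H0 in Hw by auto.
  assert (0 <= PI * (al ^ 2 + be ^ 2)) by (pose proof (pow2_ge_0 al); pose proof (pow2_ge_0 be); nra).
  assert (0 <= 2 * PI * c ^ 2) by (pose proof (pow2_ge_0 c); nra).
  lra.
Qed.

(** * Support functions and mixed areas *)

Definition is_C2 (f f1 f2 : R -> R) : Prop :=
  (forall t, is_derive f t (f1 t)) /\ (forall t, is_derive f1 t (f2 t)) /\ continuous_R f2.

Lemma is_C2_continuous f f1 f2 : is_C2 f f1 f2 -> continuous_R f /\ continuous_R f1.
Proof.
  intros [D1 [D2' _]].
  split; [apply (continuous_of_is_derive f f1) | apply (continuous_of_is_derive f1 f2)]; auto.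
Qed.

Lemma is_C2_periodic f f1 f2 : periodic f -> is_C2 f f1 f2 -> periodic f1 /\ periodic f2.
Proof.
  intros Hp [D1 [D2' _]]. assert (Hp1 : periodic f1) by (apply (periodic_of_is_derive f); auto).
  split; auto. apply (periodic_of_is_derive f1); auto.
Qed.

Lemma Derive_is_C2 f f1 f2 : is_C2 f f1 f2 -> Derive f = f1 /\ Derive (Derive f) = f2.
Proof.
  intros [D1 [D2' _]].
  assert (E1 : Derive f = f1)
    by (apply functional_extensionality; intros t; apply is_derive_unique, D1).
  split; auto. rewrite E1. apply functional_extensionality; intros t; apply is_derive_unique, D2'.
Qed.

Lemma D2_is_C2 f f1 f2 : is_C2 f f1 f2 -> forall t, D2 f t = f2 t + f t.
Proof. intros HC t. unfold D2. rewrite (proj2 (Derive_is_C2 _ _ _ HC)). reflexivity. Qed.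

Lemma C2_S1_of_is_C2 f f1 f2 : periodic f -> is_C2 f f1 f2 -> C2_S1 f.
Proof.
  intros Hp HC. destruct (Derive_is_C2 _ _ _ HC) as [E1 E2].
  destruct HC as [D1 [D2' C2]]. repeat split; auto.
  - intros t. exists (f1 t). auto.
  - intros t. rewrite E1. exists (f2 t). auto.
  - intros t. rewrite E2. apply C2.
Qed.

Lemma is_C2_of_C2_S1 h : C2_S1 h -> is_C2 h (Derive h) (Derive (Derive h)).
Proof.
  intros [_ [H1 [H2 H3]]].
  split; [|split]; [intros x; apply Derive_correct, H1 | intros x; apply Derive_correct, H2 | exact H3].
Qed.

Lemma is_C2_div (f f1 f2 g g1 g2 : R -> R) :
  is_C2 f f1 f2 -> is_C2 g g1 g2 -> (forall t, g t <> 0) ->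
  is_C2 (fun t => f t / g t) (fun t => (f1 t * g t - f t * g1 t) / g t ^ 2)
    (fun t => ((f2 t * g t - f t * g2 t) * g t ^ 2
               - (f1 t * g t - f t * g1 t) * (2 * g1 t * g t)) / (g t ^ 2) ^ 2).
Proof.
  intros HF HG Hn.
  destruct (is_C2_continuous _ _ _ HF) as [Cf Cf1]. destruct (is_C2_continuous _ _ _ HG) as [Cg Cg1].
  destruct HF as [DF1 [DF2 Cf2]]. destruct HG as [DG1 [DG2 Cg2]].
  split; [|split]; intros t.
  - eapply is_derive_val; [derive_rules; auto | reflexivity].
  - eapply is_derive_val; [derive_rules; apply pow_nonzero; auto | cbv beta; field; auto].
  - cont_rules; apply pow_nonzero; auto; apply pow_nonzero; auto.
Qed.

Lemma is_C2_cos : is_C2 cos (fun t => - sin t) (fun t => - cos t).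
Proof.
  split; [|split]; intros t; [apply is_derive_cos | | cont_rules].
  eapply is_derive_val; [derive_rules | ring].
Qed.

Lemma is_C2_sin : is_C2 sin cos (fun t => - sin t).
Proof. split; [|split]; intros t; [apply is_derive_sin | apply is_derive_cos | cont_rules]. Qed.

Lemma int_S1_D2_symmetric f f1 f2 g g1 g2 :
  periodic f -> periodic g -> is_C2 f f1 f2 -> is_C2 g g1 g2 ->
  int_S1 (fun t => f t * (g2 t + g t)) = int_S1 (fun t => g t * (f2 t + f t)).
Proof.
  intros Pf Pg HF HG.
  destruct (is_C2_continuous _ _ _ HF) as [Cf Cf1]. destruct (is_C2_continuous _ _ _ HG) as [Cg Cg1].
  destruct (is_C2_periodic _ _ _ Pf HF) as [Pf1 _]. destruct (is_C2_periodic _ _ _ Pg HG) as [Pg1 _].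
  pose proof HF as [DF1 [DF2 Cf2]]. pose proof HG as [DG1 [DG2 Cg2]].
  pose proof (int_S1_by_parts g1 g2 f f1 Pg1 Pf DG2 DF1 Cg2 Cf1) as Eg.
  pose proof (int_S1_by_parts f1 f2 g g1 Pf1 Pg DF2 DG1 Cf2 Cg1) as Ef.
  rewrite (int_S1_ext _ (fun t => g2 t * f t + f t * g t)) by (intros; ring).
  rewrite (int_S1_ext (fun t => g t * _) (fun t => f2 t * g t + f t * g t)) by (intros; ring).
  int_S1_linear. rewrite Eg, Ef.
  rewrite (int_S1_ext (fun t => g1 t * f1 t) (fun t => f1 t * g1 t)) by (intros; ring).
  reflexivity.
Qed.

Lemma D2_orthogonal_cos_sin h h1 h2 : periodic h -> is_C2 h h1 h2 ->
  int_S1 (fun t => cos t * (h2 t + h t)) = 0 /\ int_S1 (fun t => sin t * (h2 t + h t)) = 0.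
Proof.
  intros Hp HC.
  rewrite (int_S1_D2_symmetric _ _ _ _ _ _ periodic_cos Hp is_C2_cos HC),
          (int_S1_D2_symmetric _ _ _ _ _ _ periodic_sin Hp is_C2_sin HC).
  split; rewrite (int_S1_ext _ (fun _ => 0)), int_S1_const by (intros; ring); ring.
Qed.

Lemma body_periodic h : body_Kplus2 h -> periodic h.
Proof. intros [[Hp _] _]; exact Hp. Qed.

Lemma body_is_C2 h : body_Kplus2 h -> is_C2 h (Derive h) (Derive (Derive h)).
Proof. intros [HC _]. apply is_C2_of_C2_S1, HC. Qed.

Lemma continuous_D2 h : body_Kplus2 h -> continuous_R (D2 h).
Proof.
  intros Hb. pose proof (body_is_C2 h Hb) as HC.
  destruct (is_C2_continuous _ _ _ HC) as [Ch _]. destruct HC as [_ [_ C2]].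
  intros t; unfold D2; cont_rules.
Qed.

Lemma body_D2_orthogonal_cos_sin h : body_Kplus2 h ->
  int_S1 (fun t => cos t * D2 h t) = 0 /\ int_S1 (fun t => sin t * D2 h t) = 0.
Proof. intros Hb. exact (D2_orthogonal_cos_sin _ _ _ (body_periodic _ Hb) (body_is_C2 _ Hb)). Qed.

Lemma bd_speed_D2 h : body_Kplus2 h -> forall t, bd_speed h t = D2 h t.
Proof.
  intros Hb t. pose proof (body_is_C2 h Hb) as [D1 [D2' _]]. destruct Hb as [_ [_ Hq]].
  assert (E1 : Derive (bdX1 h) t = - D2 h t * sin t).
  { apply is_derive_unique. unfold bdX1, D2. eapply is_derive_val; [derive_rules | cbv beta; ring]. }
  assert (E2 : Derive (bdX2 h) t = D2 h t * cos t).
  { apply is_derive_unique. unfold bdX2, D2. eapply is_derive_val; [derive_rules | cbv beta; ring]. }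
  unfold bd_speed. rewrite E1, E2.
  replace ((- D2 h t * sin t) ^ 2 + (D2 h t * cos t) ^ 2) with (Rsqr (D2 h t)).
  - apply sqrt_Rsqr. specialize (Hq t). lra.
  - rewrite <- (Rmult_1_r (Rsqr _)), <- (sin2_cos2 t). unfold Rsqr. ring.
Qed.

Lemma bd_integral_D2 h f : body_Kplus2 h -> bd_integral h f = int_S1 (fun t => f t * D2 h t).
Proof. intros Hb. apply int_S1_ext. intros x. rewrite bd_speed_D2; auto. Qed.

Lemma bd_integral_curv_rel hK hL : body_Kplus2 hK -> body_Kplus2 hL ->
  bd_integral hL (fun t => / curv_rel hL hK t * hK t)
  = int_S1 (fun t => D2 hL t ^ 2 * hK t / D2 hK t).
Proof.
  intros HK HL. rewrite bd_integral_D2 by auto. apply int_S1_ext. intros t.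
  unfold curv_rel, curv. rewrite !bd_speed_D2 by auto.
  destruct HL as [_ [_ HpL]]. destruct HK as [_ [_ HpK]].
  specialize (HpL t). specialize (HpK t). field. lra.
Qed.

Lemma int_S1_D2_form f f1 f2 : periodic f -> is_C2 f f1 f2 ->
  int_S1 (fun t => f t * (f2 t + f t)) = int_S1 (fun t => f t ^ 2) - int_S1 (fun t => f1 t ^ 2).
Proof.
  intros Pf HF. destruct (is_C2_continuous _ _ _ HF) as [Cf Cf1].
  destruct (is_C2_periodic _ _ _ Pf HF) as [Pf1 _]. pose proof HF as [DF1 [DF2 Cf2]].
  pose proof (int_S1_by_parts f1 f2 f f1 Pf1 Pf DF2 DF1 Cf2 Cf1) as Hibp.
  rewrite (int_S1_ext _ (fun t => f2 t * f t + f t ^ 2)) by (intros; ring).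
  rewrite (int_S1_ext (fun t => f1 t ^ 2) (fun t => f1 t * f1 t)) by (intros; ring).
  int_S1_linear. lra.
Qed.

(* With Q(f) = \int f D^2 f, write f = g + s h_K with g of mean zero; the orthogonality
   gives Q(f) = Q(g) - s^2 Q(h_K), where Q(g) <= 0 is Wirtinger's inequality and
   Q(h_K) = 2 V(K) > 0. *)
Lemma D2_form_nonpos hK f f1 f2 :
  body_Kplus2 hK -> periodic f -> is_C2 f f1 f2 -> int_S1 (fun t => f t * D2 hK t) = 0 ->
  int_S1 (fun t => f t * (f2 t + f t)) <= 0.
Proof.
  intros HbK Pf HF Horth. pose proof (body_is_C2 _ HbK) as CK. pose proof (body_periodic _ HbK) as PK.
  pose proof (continuous_D2 _ HbK) as Cq. pose proof HbK as [_ [Hpos Hq]].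
  destruct (is_C2_continuous _ _ _ CK) as [ChK Ck1]. destruct (is_C2_continuous _ _ _ HF) as [Cf Cf1].
  pose proof CK as [DK1 [DK2 Ck2]]. pose proof HF as [DF1 [DF2 Cf2]].
  assert (HT : 0 < int_S1 hK) by (apply int_S1_gt0; auto).
  set (s := int_S1 f / int_S1 hK).
  set (g := fun t => f t - s * hK t). set (g1 := fun t => f1 t - s * Derive hK t).
  set (g2 := fun t => f2 t - s * Derive (Derive hK) t).
  assert (HG : is_C2 g g1 g2).
  { split; [|split]; intros t; unfold g, g1, g2;
      [eapply is_derive_val; [derive_rules | cbv beta; ring] .. | cont_rules]. }
  assert (HQ : int_S1 (fun t => g t * (g2 t + g t)) <= 0).
  { rewrite (int_S1_D2_form g g1 g2) by (auto; intros t; unfold g; rewrite Pf, PK; reflexivity).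
    enough (int_S1 (fun t => g t ^ 2) <= int_S1 (fun t => g1 t ^ 2)) by lra.
    apply wirtinger_mean_zero;
      [intros t; unfold g; rewrite Pf, PK; auto | apply (proj1 HG) | unfold g1; intros t; cont_rules |].
    unfold g. int_S1_linear. unfold s. field. lra. }
  assert (Hsym : int_S1 (fun t => hK t * (f2 t + f t)) = 0).
  { rewrite <- (int_S1_D2_symmetric f f1 f2 hK (Derive hK) (Derive (Derive hK))) by auto.
    exact Horth. }
  assert (HT2 : 0 <= int_S1 (fun t => hK t * D2 hK t)).
  { apply int_S1_ge0; [intros t; cont_rules |].
    intros t. specialize (Hq t). specialize (Hpos t). nra. }
  rewrite (int_S1_ext _ (fun t => f t * (f2 t + f t) - s * (f t * D2 hK t)
                                  - s * (hK t * (f2 t + f t)) + s ^ 2 * (hK t * D2 hK t))) in HQ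
    by (intros; unfold g, g2, D2; ring).
  int_S1_linear_in HQ. rewrite Horth, Hsym in HQ.
  assert (0 <= s ^ 2 * int_S1 (fun t => hK t * D2 hK t)) by (apply Rmult_le_pos; auto; apply pow2_ge_0).
  lra.
Qed.

Lemma area_D2 h : body_Kplus2 h -> area h = / 2 * int_S1 (fun t => h t * D2 h t).
Proof. intros Hb. unfold area. rewrite bd_integral_D2; auto. Qed.

Lemma mixed_area_D2 hK hL :
  body_Kplus2 hL -> mixed_area hK hL = / 2 * int_S1 (fun t => hK t * D2 hL t).
Proof. intros Hb. unfold mixed_area. rewrite bd_integral_D2; auto. Qed.

Lemma int_S1_mixed_symmetric hK hL : body_Kplus2 hK -> body_Kplus2 hL ->
  int_S1 (fun t => hL t * D2 hK t) = int_S1 (fun t => hK t * D2 hL t).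
Proof.
  intros HK HL. unfold D2.
  apply (int_S1_D2_symmetric hL (Derive hL) _ hK (Derive hK));
    [apply body_periodic | apply body_periodic | apply body_is_C2 ..]; auto.
Qed.

Lemma minkowski_mixed_area hK hL : body_Kplus2 hK -> body_Kplus2 hL ->
  area hK * area hL <= mixed_area hK hL ^ 2.
Proof.
  intros HK HL. rewrite !area_D2, mixed_area_D2 by auto.
  pose proof (body_is_C2 _ HK) as CK. pose proof (body_is_C2 _ HL) as CL.
  destruct (is_C2_continuous _ _ _ CK) as [ChK _]. destruct (is_C2_continuous _ _ _ CL) as [ChL _].
  pose proof (continuous_D2 _ HK) as Cq. pose proof (continuous_D2 _ HL) as Cp.
  set (S := int_S1 (fun t => hK t * D2 hL t)). set (T := int_S1 (fun t => hK t * D2 hK t)).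
  set (U := int_S1 (fun t => hL t * D2 hL t)).
  assert (HT : 0 < T).
  { apply int_S1_gt0; [intros t; cont_rules |]. intros t.
    destruct HK as [_ [Hpos Hq]]. apply Rmult_lt_0_compat; auto. }
  set (a := S / T).
  assert (Hneg : int_S1 (fun t => (hL t - a * hK t) * ((Derive (Derive hL) t - a * Derive (Derive hK) t)
                                                     + (hL t - a * hK t))) <= 0).
  { apply (D2_form_nonpos hK _ (fun t => Derive hL t - a * Derive hK t)); auto.
    - intros t. rewrite (body_periodic _ HK), (body_periodic _ HL). auto.
    - destruct CK as [DK1 [DK2 Ck2]]. destruct CL as [DL1 [DL2 Cl2]].
      split; [|split]; intros t; [eapply is_derive_val; [derive_rules | cbv beta; ring] ..|].
      cont_rules.
    - rewrite (int_S1_ext _ (fun t => hL t * D2 hK t - a * (hK t * D2 hK t))) by (intros; ring).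
      int_S1_linear. rewrite int_S1_mixed_symmetric by auto. unfold a. fold S T. field. lra. }
  rewrite (int_S1_ext _ (fun t => hL t * D2 hL t - a * (hL t * D2 hK t) - a * (hK t * D2 hL t)
                                    + a ^ 2 * (hK t * D2 hK t))) in Hneg
    by (intros; unfold D2; ring).
  int_S1_linear_in Hneg. rewrite (int_S1_mixed_symmetric hK hL HK HL) in Hneg. fold S T U in Hneg.
  unfold a in Hneg.
  assert (Hkey : T * U <= S ^ 2).
  { replace (U - S / T * S - S / T * S + (S / T) ^ 2 * T) with ((T * U - S ^ 2) / T) in Hneg
      by (field; lra).
    apply Rmult_le_compat_r with (r := T) in Hneg; [|lra].
    unfold Rdiv in Hneg. rewrite Rmult_assoc, Rinv_l, Rmult_0_l in Hneg by lra. lra. }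
  lra.
Qed.

Lemma sqr_le_of_quadratic_nonneg a b c :
  0 <= a -> (forall s, 0 <= a * s ^ 2 - 2 * b * s + c) -> b ^ 2 <= a * c.
Proof.
  intros Ha H. destruct (Rle_lt_or_eq_dec 0 a Ha) as [Hp|<-].
  - specialize (H (b / a)).
    replace (a * (b / a) ^ 2 - 2 * b * (b / a) + c) with ((a * c - b ^ 2) / a) in H by (field; lra).
    apply Rmult_le_compat_r with (r := a) in H; [|lra].
    unfold Rdiv in H. rewrite Rmult_assoc, Rinv_l, Rmult_0_l in H by lra. lra.
  - destruct (Req_dec b 0) as [->|Hb]; [lra|].
    specialize (H ((c + 1) / (2 * b))).
    replace (0 * ((c + 1) / (2 * b)) ^ 2 - 2 * b * ((c + 1) / (2 * b)) + c) with (-1) in H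
      by (field; lra).
    lra.
Qed.

Lemma int_S1_cauchy_schwarz (u v rho : R -> R) :
  continuous_R u -> continuous_R v -> continuous_R rho -> (forall t, 0 <= rho t) ->
  int_S1 (fun t => u t * v t * rho t) ^ 2
    <= int_S1 (fun t => u t ^ 2 * rho t) * int_S1 (fun t => v t ^ 2 * rho t).
Proof.
  intros Hu Hv Hr Hn. apply sqr_le_of_quadratic_nonneg.
  - apply int_S1_ge0; [intros t; cont_rules |]. intros t. apply Rmult_le_pos; auto. apply pow2_ge_0.
  - intros s.
    replace (int_S1 (fun t => u t ^ 2 * rho t) * s ^ 2 - 2 * int_S1 (fun t => u t * v t * rho t) * s
             + int_S1 (fun t => v t ^ 2 * rho t))
      with (int_S1 (fun t => (v t - s * u t) ^ 2 * rho t)).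
    + apply int_S1_ge0; [intros t; cont_rules |].
      intros t. apply Rmult_le_pos; auto. apply pow2_ge_0.
    + rewrite (int_S1_ext _ (fun t => s ^ 2 * (u t ^ 2 * rho t) - (2 * s) * (u t * v t * rho t)
                                     + v t ^ 2 * rho t)) by (intros; ring).
      int_S1_linear. ring.
Qed.

(** * The Rayleigh quotient of -L_K *)

Lemma gram_cos_sin_pos (rho : R -> R) : continuous_R rho -> periodic rho -> (forall t, 0 < rho t) ->
  0 < int_S1 (fun t => cos t ^ 2 * rho t) * int_S1 (fun t => sin t ^ 2 * rho t)
      - int_S1 (fun t => cos t * sin t * rho t) ^ 2.
Proof.
  intros Hc Hp Hpos.
  set (g11 := int_S1 (fun t => cos t ^ 2 * rho t)). set (g22 := int_S1 (fun t => sin t ^ 2 * rho t)).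
  set (g12 := int_S1 (fun t => cos t * sin t * rho t)).
  assert (Hform : forall al be, 0 < (al * cos 0 + be * sin 0) ^ 2 * rho 0 \/
                                0 < (al * cos (PI / 2) + be * sin (PI / 2)) ^ 2 * rho (PI / 2) ->
                  0 < al ^ 2 * g11 + 2 * al * be * g12 + be ^ 2 * g22).
  { intros al be Hpt.
    replace (al ^ 2 * g11 + 2 * al * be * g12 + be ^ 2 * g22)
      with (int_S1 (fun t => (al * cos t + be * sin t) ^ 2 * rho t)).
    - assert (Hnn : forall t, 0 <= (al * cos t + be * sin t) ^ 2 * rho t)
        by (intros; apply Rmult_le_pos; [apply pow2_ge_0 | left; auto]).
      assert (Hper : periodic (fun t => (al * cos t + be * sin t) ^ 2 * rho t))
        by (intros t; rewrite periodic_cos, periodic_sin, Hp; reflexivity).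
      destruct Hpt; [apply (int_S1_pos_of_pos_at _ 0) | apply (int_S1_pos_of_pos_at _ (PI / 2))];
        auto; intros t; cont_rules.
    - rewrite (int_S1_ext _ (fun t => al ^ 2 * (cos t ^ 2 * rho t)
          + (2 * al * be) * (cos t * sin t * rho t) + be ^ 2 * (sin t ^ 2 * rho t))) by (intros; ring).
      int_S1_linear. reflexivity. }
  assert (H22 : 0 < g22).
  { replace g22 with (0 ^ 2 * g11 + 2 * 0 * 1 * g12 + 1 ^ 2 * g22) by ring.
    apply Hform. right. rewrite sin_PI2, cos_PI2. specialize (Hpos (PI / 2)). simpl. lra. }
  assert (Hmain : 0 < g22 * (g11 * g22 - g12 ^ 2)).
  { replace (g22 * (g11 * g22 - g12 ^ 2))
      with (g22 ^ 2 * g11 + 2 * g22 * - g12 * g12 + (- g12) ^ 2 * g22) by ring.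
    apply Hform. left. rewrite sin_0, cos_0. specialize (Hpos 0).
    replace ((g22 * 1 + - g12 * 0) ^ 2) with (g22 ^ 2) by ring.
    apply Rmult_lt_0_compat; auto. apply pow_lt; auto. }
  apply (Rmult_lt_reg_l g22); auto. lra.
Qed.

Lemma exists_trig_projection (F rho : R -> R) :
  continuous_R F -> continuous_R rho -> periodic rho -> (forall t, 0 < rho t) ->
  exists v1 v2,
    int_S1 (fun t => (F t - v1 * cos t - v2 * sin t) * cos t * rho t) = 0 /\
    int_S1 (fun t => (F t - v1 * cos t - v2 * sin t) * sin t * rho t) = 0.
Proof.
  intros HF Hc Hp Hpos. pose proof (gram_cos_sin_pos rho Hc Hp Hpos) as Hdet.
  set (g11 := int_S1 (fun t => cos t ^ 2 * rho t)). set (g22 := int_S1 (fun t => sin t ^ 2 * rho t)).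
  set (g12 := int_S1 (fun t => cos t * sin t * rho t)).
  set (r1 := int_S1 (fun t => F t * cos t * rho t)). set (r2 := int_S1 (fun t => F t * sin t * rho t)).
  fold g11 g22 g12 in Hdet.
  exists ((r1 * g22 - r2 * g12) / (g11 * g22 - g12 ^ 2)),
         ((g11 * r2 - g12 * r1) / (g11 * g22 - g12 ^ 2)).
  split.
  - rewrite (int_S1_ext _ (fun t => F t * cos t * rho t
        - (r1 * g22 - r2 * g12) / (g11 * g22 - g12 ^ 2) * (cos t ^ 2 * rho t)
        - (g11 * r2 - g12 * r1) / (g11 * g22 - g12 ^ 2) * (cos t * sin t * rho t)))
      by (intros; ring).
    int_S1_linear. fold r1 g11 g12. field. lra.
  - rewrite (int_S1_ext _ (fun t => F t * sin t * rho t
        - (r1 * g22 - r2 * g12) / (g11 * g22 - g12 ^ 2) * (cos t * sin t * rho t)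
        - (g11 * r2 - g12 * r1) / (g11 * g22 - g12 ^ 2) * (sin t ^ 2 * rho t)))
      by (intros; ring).
    int_S1_linear. fold r2 g22 g12. field. lra.
Qed.

Lemma Rbar_mult_gap_le (lam : Rbar) A B C :
  0 <= A -> 0 <= C -> A <= B -> B ^ 2 <= A * C ->
  (0 < A -> Rbar_le lam (Finite (B / A))) ->
  Rbar_le (Rbar_mult lam (Finite (B - A))) (Finite (C - B)).
Proof.
  intros HA HC HAB Hcs Hl.
  destruct (Rle_lt_or_eq_dec 0 A HA) as [Hp|<-].
  - destruct (Rle_lt_or_eq_dec A B HAB) as [Hlt|<-].
    + specialize (Hl Hp). destruct lam as [l| |]; simpl in Hl |- *; try tauto.
      * assert (l * (B - A) <= B / A * (B - A)) by (apply Rmult_le_compat_r; lra).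
        assert (B * B / A <= C).
        { apply (Rmult_le_reg_r A); auto. unfold Rdiv.
          rewrite Rmult_assoc, Rinv_l by lra. simpl in Hcs. lra. }
        replace (B / A * (B - A)) with (B * B / A - B) in * by (field; lra). lra.
      * unfold Rbar_mult'. destruct (Rle_dec 0 (B - A)) as [H|H]; [|lra].
        destruct (Rle_lt_or_eq_dec 0 (B - A) H); simpl; [exact Logic.I | lra].
    + rewrite Rminus_diag, Rbar_mult_0_r. simpl. nra.
  - assert (B = 0) by (simpl in Hcs; nra). subst B.
    rewrite Rminus_diag, Rbar_mult_0_r. simpl. lra.
Qed.

Definition LK_form (hK w : R -> R) : R := int_dVK hK (fun t => w t * - L_op hK w t).
Definition dVK_norm2 (hK w : R -> R) : R := int_dVK hK (fun t => w t ^ 2).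
Definition LK_norm2 (hK w : R -> R) : R := int_dVK hK (fun t => (- L_op hK w t) ^ 2).

Lemma lambda2_le_rayleigh hK w :
  C2_S1 w -> int_dVK hK w = 0 ->
  (forall v1 v2, int_dVK hK (fun t => w t * ell hK v1 v2 t) = 0) ->
  0 < dVK_norm2 hK w ->
  Rbar_le (lambda2 hK) (Finite (LK_form hK w / dVK_norm2 hK w)).
Proof.
  intros HC H0 Hl Hpos. apply (proj1 (Glb_Rbar_correct _)).
  exists w. split; [exact HC | split; [| split; [exact H0 | split; [exact Hl | reflexivity]]]].
  apply NNPP. intros Hz.
  enough (dVK_norm2 hK w = 0) by lra.
  unfold dVK_norm2, int_dVK. rewrite (int_S1_ext _ (fun _ => 0)), int_S1_const; [ring|].
  intros x. destruct (Req_dec (w x) 0) as [->|E]; [ring | exfalso; apply Hz; exists x; auto].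
Qed.

Lemma int_dVK_sq_nonneg hK u : body_Kplus2 hK -> continuous_R u ->
  0 <= int_dVK hK (fun t => u t ^ 2).
Proof.
  intros HK Cu. pose proof (continuous_D2 _ HK) as Cq.
  pose proof (is_C2_continuous _ _ _ (body_is_C2 _ HK)) as [ChK _]. destruct HK as [_ [Hpos Hq]].
  apply int_S1_ge0; [intros t; cont_rules |].
  intros t. specialize (Hpos t). specialize (Hq t).
  apply Rmult_le_pos; [apply pow2_ge_0 | nra].
Qed.

Lemma LK_form_sq_le hK w : body_Kplus2 hK -> continuous_R w -> continuous_R (L_op hK w) ->
  LK_form hK w ^ 2 <= dVK_norm2 hK w * LK_norm2 hK w.
Proof.
  intros HK Cw CL. pose proof (continuous_D2 _ HK) as Cq.
  pose proof (is_C2_continuous _ _ _ (body_is_C2 _ HK)) as [ChK _]. destruct HK as [_ [Hpos Hq]].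
  apply int_S1_cauchy_schwarz; [auto | intros t; cont_rules | intros t; cont_rules |].
  intros t. specialize (Hpos t). specialize (Hq t). nra.
Qed.

Lemma L_op_quotient hK f f1 f2 : (forall t, hK t <> 0) -> is_C2 f f1 f2 ->
  L_op hK (fun t => f t / hK t) = fun t => (f2 t + f t) / D2 hK t - f t / hK t.
Proof.
  intros Hn HF. apply functional_extensionality. intros t. unfold L_op.
  replace (fun s => f s / hK s * hK s) with f
    by (apply functional_extensionality; intros; field; auto).
  rewrite (D2_is_C2 _ _ _ HF). reflexivity.
Qed.

Lemma LK_form_gaps hK f f1 f2 : body_Kplus2 hK -> is_C2 f f1 f2 ->
  let w := fun t => f t / hK t in
  LK_form hK w - dVK_norm2 hK w = - / 2 * int_S1 (fun t => f t * (f2 t + f t)) /\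
  LK_norm2 hK w - LK_form hK w
  = / 2 * int_S1 (fun t => (f2 t + f t) ^ 2 * hK t / D2 hK t)
    - / 2 * int_S1 (fun t => f t * (f2 t + f t)).
Proof.
  intros HK HF w. pose proof (continuous_D2 _ HK) as Cq.
  pose proof (is_C2_continuous _ _ _ (body_is_C2 _ HK)) as [ChK _].
  destruct (is_C2_continuous _ _ _ HF) as [Cf _]. pose proof HF as [_ [_ Cf2]].
  destruct HK as [_ [Hpos Hq]].
  assert (HKn : forall t, hK t <> 0) by (intros t; specialize (Hpos t); lra).
  assert (Hqn : forall t, D2 hK t <> 0) by (intros t; specialize (Hq t); lra).
  unfold LK_form, LK_norm2, dVK_norm2, int_dVK, w.
  rewrite (L_op_quotient hK f f1 f2 HKn HF).
  split; rewrite <- int_S1_minus by (intros t; cont_rules; auto).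
  - rewrite (int_S1_ext _ (fun t => - / 2 * (f t * (f2 t + f t)))).
    + int_S1_linear. reflexivity.
    + intros x. field. auto.
  - rewrite (int_S1_ext _ (fun t => / 2 * ((f2 t + f t) ^ 2 * hK t / D2 hK t)
                                   - / 2 * (f t * (f2 t + f t)))).
    + int_S1_linear. reflexivity.
    + intros x. field. auto.
Qed.

Lemma quotient_admissible hK f f1 f2 :
  body_Kplus2 hK -> periodic f -> is_C2 f f1 f2 ->
  int_S1 (fun t => f t * D2 hK t) = 0 ->
  int_S1 (fun t => f t * cos t * (D2 hK t / hK t)) = 0 ->
  int_S1 (fun t => f t * sin t * (D2 hK t / hK t)) = 0 ->
  let w := fun t => f t / hK t in
  C2_S1 w /\ int_dVK hK w = 0 /\ forall v1 v2, int_dVK hK (fun t => w t * ell hK v1 v2 t) = 0.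
Proof.
  intros HK Pf HF H0 Hcos Hsin w. pose proof (continuous_D2 _ HK) as Cq.
  pose proof (body_is_C2 _ HK) as CK. pose proof (body_periodic _ HK) as PK.
  destruct (is_C2_continuous _ _ _ CK) as [ChK _]. destruct (is_C2_continuous _ _ _ HF) as [Cf _].
  destruct HK as [_ [Hpos _]].
  assert (HKn : forall t, hK t <> 0) by (intros t; specialize (Hpos t); lra).
  split; [|split].
  - refine (C2_S1_of_is_C2 _ _ _ _ (is_C2_div _ _ _ _ _ _ HF CK HKn)).
    intros t. rewrite Pf, PK. reflexivity.
  - unfold int_dVK. rewrite (int_S1_ext _ (fun t => / 2 * (f t * D2 hK t))).
    + int_S1_linear. rewrite H0. ring.
    + intros x. unfold w. field. auto.
  - intros v1 v2. unfold int_dVK, ell.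
    rewrite (int_S1_ext _ (fun t => v1 / 2 * (f t * cos t * (D2 hK t / hK t))
                                    + v2 / 2 * (f t * sin t * (D2 hK t / hK t)))).
    + int_S1_linear. rewrite Hcos, Hsin. ring.
    + intros x. unfold w. field. auto.
Qed.

Lemma lambda2_test_bound hK f f1 f2 :
  body_Kplus2 hK -> periodic f -> is_C2 f f1 f2 ->
  int_S1 (fun t => f t * D2 hK t) = 0 ->
  int_S1 (fun t => f t * cos t * (D2 hK t / hK t)) = 0 ->
  int_S1 (fun t => f t * sin t * (D2 hK t / hK t)) = 0 ->
  Rbar_le (Rbar_mult (lambda2 hK) (Finite (- / 2 * int_S1 (fun t => f t * (f2 t + f t)))))
    (Finite (/ 2 * int_S1 (fun t => (f2 t + f t) ^ 2 * hK t / D2 hK t)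
             - / 2 * int_S1 (fun t => f t * (f2 t + f t)))).
Proof.
  intros HK Pf HF H0 Hcos Hsin.
  destruct (quotient_admissible hK f f1 f2 HK Pf HF H0 Hcos Hsin) as [Hw [Hw0 Hwl]].
  destruct (LK_form_gaps hK f f1 f2 HK HF) as [Hgap1 Hgap2].
  set (w := fun t => f t / hK t) in *.
  pose proof (is_C2_continuous _ _ _ (body_is_C2 _ HK)) as [ChK _].
  pose proof (continuous_D2 _ HK) as Cq. destruct (is_C2_continuous _ _ _ HF) as [Cf _].
  pose proof HF as [_ [_ Cf2]]. pose proof HK as [_ [Hpos Hq]].
  assert (HKn : forall t, hK t <> 0) by (intros t; specialize (Hpos t); lra).
  assert (Hqn : forall t, D2 hK t <> 0) by (intros t; specialize (Hq t); lra).
  assert (Cw : continuous_R w) by (intros t; unfold w; cont_rules; auto).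
  assert (CL : continuous_R (L_op hK w))
    by (unfold w; rewrite (L_op_quotient hK f f1 f2 HKn HF); intros t; cont_rules; auto).
  rewrite <- Hgap1, <- Hgap2.
  apply Rbar_mult_gap_le; [apply int_dVK_sq_nonneg; auto | | | apply LK_form_sq_le; auto |].
  - apply int_dVK_sq_nonneg; auto. intros t; cont_rules.
  - pose proof (D2_form_nonpos hK f f1 f2 HK Pf HF H0). lra.
  - intros HA. apply lambda2_le_rayleigh; auto.
Qed.

(** * The stability inequality *)

Lemma stability_test_function hK hL : body_Kplus2 hK -> body_Kplus2 hL ->
  let a := int_S1 (fun t => hK t * D2 hL t) / int_S1 (fun t => hK t * D2 hK t) in
  exists f f1 f2, periodic f /\ is_C2 f f1 f2 /\
    int_S1 (fun t => f t * D2 hK t) = 0 /\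
    int_S1 (fun t => f t * cos t * (D2 hK t / hK t)) = 0 /\
    int_S1 (fun t => f t * sin t * (D2 hK t / hK t)) = 0 /\
    (forall t, f2 t + f t = D2 hL t - a * D2 hK t) /\
    int_S1 (fun t => f t * (f2 t + f t))
    = int_S1 (fun t => hL t * D2 hL t) - a * int_S1 (fun t => hK t * D2 hL t).
Proof.
  intros HK HL a.
  pose proof (body_is_C2 _ HK) as CK. pose proof (body_is_C2 _ HL) as CL.
  destruct (is_C2_continuous _ _ _ CK) as [ChK _]. destruct (is_C2_continuous _ _ _ CL) as [ChL _].
  pose proof (continuous_D2 _ HK) as Cq. pose proof (continuous_D2 _ HL) as Cp.
  pose proof (body_periodic _ HK) as PK. pose proof (body_periodic _ HL) as PL.
  pose proof HK as [_ [HKpos Hq]].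
  assert (HT : 0 < int_S1 (fun t => hK t * D2 hK t))
    by (apply int_S1_gt0; [intros t; cont_rules | intros t; apply Rmult_lt_0_compat; auto]).
  destruct (exists_trig_projection (fun t => hL t - a * hK t) (fun t => D2 hK t / hK t))
    as [v1 [v2 [Ocos Osin]]].
  { intros t; cont_rules. }
  { intros t; cont_rules. specialize (HKpos t). lra. }
  { intros t. unfold D2. destruct (is_C2_periodic _ _ _ PK CK) as [_ Pk2].
    rewrite Pk2, PK. reflexivity. }
  { intros t. apply Rdiv_lt_0_compat; auto. }
  set (f := fun t => hL t - a * hK t - v1 * cos t - v2 * sin t).
  set (f2 := fun t => Derive (Derive hL) t - a * Derive (Derive hK) t + v1 * cos t + v2 * sin t).
  exists f, (fun t => Derive hL t - a * Derive hK t + v1 * sin t - v2 * cos t), f2.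
  assert (HF : is_C2 f (fun t => Derive hL t - a * Derive hK t + v1 * sin t - v2 * cos t) f2).
  { destruct CK as [DK1 [DK2 Ck2]]. destruct CL as [DL1 [DL2 Cl2]].
    split; [|split]; intros t; unfold f, f2;
      [eapply is_derive_val; [derive_rules | cbv beta; ring] .. | cont_rules]. }
  destruct (is_C2_continuous _ _ _ HF) as [Cf _].
  destruct (body_D2_orthogonal_cos_sin hK HK) as [JcK JsK].
  destruct (body_D2_orthogonal_cos_sin hL HL) as [JcL JsL].
  assert (Horth : int_S1 (fun t => f t * D2 hK t) = 0).
  { rewrite (int_S1_ext _ (fun t => hL t * D2 hK t - a * (hK t * D2 hK t)
                                    - v1 * (cos t * D2 hK t) - v2 * (sin t * D2 hK t)))
      by (intros; unfold f; ring).
    int_S1_linear. rewrite int_S1_mixed_symmetric, JcK, JsK by auto. unfold a. field. lra. }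
  assert (HD2f : forall t, f2 t + f t = D2 hL t - a * D2 hK t) by (intros; unfold f, f2, D2; ring).
  refine (conj _ (conj HF (conj Horth (conj Ocos (conj Osin (conj HD2f _)))))).
  - intros t; unfold f; rewrite PL, PK, periodic_cos, periodic_sin; reflexivity.
  - rewrite (int_S1_ext _ (fun t => hL t * D2 hL t - a * (hK t * D2 hL t) - v1 * (cos t * D2 hL t)
                                    - v2 * (sin t * D2 hL t) - a * (f t * D2 hK t)))
      by (intros; rewrite HD2f; unfold f; ring).
    int_S1_linear. rewrite Horth, JcL, JsL. ring.
Qed.

Lemma stability_inequality hK hL : body_Kplus2 hK -> body_Kplus2 hL ->
  Rbar_le (Rbar_mult (lambda2 hK) (Finite (mixed_area hK hL ^ 2 / area hK - area hL)))
    (Finite (/ 2 * bd_integral hL (fun t => / curv_rel hL hK t * hK t) - area hL)).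
Proof.
  intros HK HL.
  destruct (stability_test_function hK hL HK HL)
    as (f & f1 & f2 & Pf & HF & H0 & Hc & Hs & HD2f & Hform).
  pose proof (lambda2_test_bound hK f f1 f2 HK Pf HF H0 Hc Hs) as Hb.
  pose proof (is_C2_continuous _ _ _ (body_is_C2 _ HK)) as [ChK _].
  pose proof (continuous_D2 _ HK) as Cq. pose proof (continuous_D2 _ HL) as Cp.
  pose proof HK as [_ [HKpos Hq]].
  assert (Hqn : forall t, D2 hK t <> 0) by (intros t; specialize (Hq t); lra).
  rewrite mixed_area_D2, !area_D2, bd_integral_curv_rel by auto.
  set (S := int_S1 (fun t => hK t * D2 hL t)) in *. set (T := int_S1 (fun t => hK t * D2 hK t)) in *.
  set (U := int_S1 (fun t => hL t * D2 hL t)) in *.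
  set (W := int_S1 (fun t => D2 hL t ^ 2 * hK t / D2 hK t)).
  assert (HT : 0 < T)
    by (apply int_S1_gt0; [intros t; cont_rules | intros t; apply Rmult_lt_0_compat; auto]).
  rewrite (int_S1_ext (fun t => (f2 t + f t) ^ 2 * hK t / D2 hK t)
             (fun t => D2 hL t ^ 2 * hK t / D2 hK t - (2 * (S / T)) * (hK t * D2 hL t)
                       + (S / T) ^ 2 * (hK t * D2 hK t))) in Hb.
  2:{ intros x. rewrite HD2f. field. split; [lra | auto]. }
  int_S1_linear_in Hb. rewrite Hform in Hb. fold S T W in Hb.
  replace ((/ 2 * S) ^ 2 / (/ 2 * T) - / 2 * U) with (- / 2 * (U - S / T * S)) by (field; lra).
  replace (/ 2 * W - / 2 * U)
    with (/ 2 * (W - 2 * (S / T) * S + (S / T) ^ 2 * T) - / 2 * (U - S / T * S)) by (field; lra).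
  exact Hb.
Qed.

Lemma is_C2_const_one : is_C2 (fun _ => 1) (fun _ => 0) (fun _ => 0).
Proof.
  split; [|split]; intros t; [apply is_derive_Rconst | apply is_derive_Rconst | apply continuous_const].
Qed.

Lemma D2_const_one t : D2 (fun _ => 1) t = 1.
Proof. rewrite (D2_is_C2 _ _ _ is_C2_const_one). ring. Qed.

Lemma body_disc : body_Kplus2 (fun _ => 1).
Proof.
  split; [|split]; intros; [| lra | rewrite D2_const_one; lra].
  apply (C2_S1_of_is_C2 _ _ _ (fun t : R => eq_refl : (fun _ => 1) (t + 2 * PI) = (fun _ => 1) t)
           is_C2_const_one).
Qed.

Lemma lambda2_disc : Rbar_le (Finite 4) (lambda2 (fun _ => 1)).
Proof.
  apply (proj2 (Glb_Rbar_correct _)). intros x [z [Hz [[t0 Ht0] [H0 [Hv Hx]]]]].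
  pose proof (is_C2_of_C2_S1 z Hz) as HC. pose proof (proj1 Hz) as Pz.
  destruct (is_C2_continuous _ _ _ HC) as [Cz Cz1]. pose proof HC as [D1 [D2' C2]].
  set (z1 := Derive z) in *. set (z2 := Derive z1) in *.
  destruct (is_C2_periodic _ _ _ Pz HC) as [Pz1 _].
  assert (Ed : forall F, int_dVK (fun _ => 1) F = int_S1 (fun t => / 2 * F t))
    by (intros F; apply int_S1_ext; intros y; rewrite D2_const_one; ring).
  assert (Hmean : int_S1 z = 0) by (rewrite Ed, int_S1_scal in H0 by auto; lra).
  assert (Htrig : forall v1 v2,
            v1 * int_S1 (fun t => z t * cos t) + v2 * int_S1 (fun t => z t * sin t) = 0).
  { intros v1 v2. specialize (Hv v1 v2). rewrite Ed in Hv. unfold ell in Hv.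
    rewrite (int_S1_ext _ (fun t => / 2 * (v1 * (z t * cos t) + v2 * (z t * sin t)))) in Hv
      by (intros; field).
    int_S1_linear_in Hv. lra. }
  pose proof (Htrig 1 0) as Hcos. pose proof (Htrig 0 1) as Hsin.
  rewrite Rmult_1_l, Rmult_0_l, Rplus_0_r in Hcos. rewrite Rmult_1_l, Rmult_0_l, Rplus_0_l in Hsin.
  pose proof (wirtinger_orth_trig z z1 Pz D1 Cz1 Hmean Hcos Hsin) as HW.
  pose proof (int_S1_by_parts z1 z2 z z1 Pz1 Pz D2' D1 C2 Cz1) as Hibp.
  assert (HL : L_op (fun _ => 1) z = z2).
  { apply functional_extensionality. intros t. unfold L_op.
    replace (fun s => z s * 1) with z by (apply functional_extensionality; intros; ring).
    rewrite D2_const_one, (D2_is_C2 _ _ _ HC). field. }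
  assert (Hpos : 0 < int_S1 (fun t => z t ^ 2)).
  { apply (int_S1_pos_of_pos_at _ t0); [intros t; cont_rules | intros t; simpl; rewrite Pz; auto
                                       | intros; apply pow2_ge_0 | apply pow2_gt_0; auto]. }
  rewrite Hx, HL, !Ed.
  rewrite (int_S1_ext _ (fun t => (- / 2) * (z2 t * z t))) by (intros; ring).
  rewrite !int_S1_scal, Hibp by (intros t; cont_rules).
  rewrite (int_S1_ext (fun t => z1 t * z1 t) (fun t => z1 t ^ 2)) by (intros; ring).
  cbn [Rbar_le]. apply Rmult_le_reg_r with (/ 2 * int_S1 (fun t => z t ^ 2)); [lra|].
  unfold Rdiv. rewrite Rmult_assoc, Rinv_l by lra. lra.
Qed.

Lemma Rbar_mult_lower_bound (lam : Rbar) c X Y :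
  Rbar_le (Finite c) lam -> 0 <= X -> Rbar_le (Rbar_mult lam (Finite X)) (Finite Y) -> c * X <= Y.
Proof.
  intros Hc HX HY. destruct (Rle_lt_or_eq_dec 0 X HX) as [Hp|<-].
  - destruct lam as [l| |]; simpl in Hc, HY; try tauto.
    + assert (c * X <= l * X) by (apply Rmult_le_compat_r; lra). lra.
    + unfold Rbar_mult' in HY. destruct (Rle_dec 0 X) as [H|H]; [|lra].
      destruct (Rle_lt_or_eq_dec 0 X H); simpl in HY; [tauto | lra].
  - rewrite Rbar_mult_0_r in HY. simpl in HY. lra.
Qed.

Lemma stability_inequality_disc hL : body_Kplus2 hL ->
  / 2 * bd_integral hL (fun t => / curv hL t) - area hL
    >= 4 * (perimeter hL ^ 2 / (4 * PI) - area hL).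
Proof.
  intros HL. pose proof PI_RGT_0.
  assert (Ea : area (fun _ => 1) = PI).
  { rewrite area_D2 by apply body_disc.
    rewrite (int_S1_ext _ (fun _ => 1)), int_S1_const by (intros; rewrite D2_const_one; ring). field. }
  assert (Em : mixed_area (fun _ => 1) hL = / 2 * perimeter hL) by reflexivity.
  assert (Eb : bd_integral hL (fun t => / curv_rel hL (fun _ => 1) t * 1)
               = bd_integral hL (fun t => / curv hL t)).
  { apply int_S1_ext. intros x. unfold curv_rel. unfold curv at 2.
    rewrite (bd_speed_D2 _ body_disc), D2_const_one. unfold Rdiv.
    rewrite !Rinv_1, !Rmult_1_r. reflexivity. }
  pose proof (stability_inequality _ _ body_disc HL) as Hs.
  pose proof (minkowski_mixed_area _ _ body_disc HL) as Hm.
  rewrite Ea, Em, Eb in *.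
  replace (perimeter hL ^ 2 / (4 * PI) - area hL) with ((/ 2 * perimeter hL) ^ 2 / PI - area hL)
    by (field; lra).
  apply Rle_ge, (Rbar_mult_lower_bound _ _ _ _ lambda2_disc); auto.
  apply Rmult_le_reg_r with PI; [lra|].
  replace (((/ 2 * perimeter hL) ^ 2 / PI - area hL) * PI)
    with ((/ 2 * perimeter hL) ^ 2 - PI * area hL) by (field; lra).
  lra.
Qed.

Theorem theorem5p6 :
  (forall hK hL : R -> R,
    body_Kplus2 hK -> body_Kplus2 hL ->
    Rbar_le
      (Rbar_mult (lambda2 hK)
         (Finite (mixed_area hK hL ^ 2 / area hK - area hL)))
      (Finite (/ 2 * bd_integral hL (fun t => / curv_rel hL hK t * hK t)
               - area hL)))
  /\
  (forall hL : R -> R,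
    body_Kplus2 hL ->
    / 2 * bd_integral hL (fun t => / curv hL t) - area hL
      >= 4 * (perimeter hL ^ 2 / (4 * PI) - area hL)).
Proof. split; [exact stability_inequality | exact stability_inequality_disc]. Qed.
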